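(* Let $\mathcal{X}_0=\{\mathbf{x}^{(0)}_1,\dots,\mathbf{x}^{(0)}_{n_0}\}$ and $\mathcal{X}_1=\{\mathbf{x}^{(1)}_1,\dots,\mathbf{x}^{(1)}_{n_1}\}$ be finite sets of points in $\mathbb{R}^d$, let $\mathcal{P}_0,\mathcal{P}_1$ be the uniform (empirical) distributions on them, and let $\mathbf{X}_0\sim\mathcal{P}_0$, $\mathbf{X}_1\sim\mathcal{P}_1$. Let $f:\mathbb{R}^d\times\{0,1\}\to[0,1]$, and let $\mathcal{P}_{f_0},\mathcal{P}_{f_1}$ be the empirical distributions on $f(\mathcal{X}_0)=\{f(\mathbf{x},0):\mathbf{x}\in\mathcal{X}_0\}$ and $f(\mathcal{X}_1)=\{f(\mathbf{x},1):\mathbf{x}\in\mathcal{X}_1\}$, i.e. the distributions of $f(\mathbf{X}_0,0)$ and $f(\mathbf{X}_1,1)$. Assume the supports of $\mathcal{P}_{f_0}$ and $\mathcal{P}_{f_1}$ share $m\ (\le n_0,n_1)$ common points. Then for any $\delta\ge0$, if $\Delta\mathrm{TVDP}(f)\le\delta$, there exists a joint distribution $\mathbb{Q}$ of $(\mathbf{X}_0,\mathbf{X}_1)$ with marginals $\mathcal{P}_0$ and $\mathcal{P}_1$ such that $\Delta\mathrm{MDP}(f,\mathbb{Q})\le\delta$.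
   Context: $\Delta\mathrm{TVDP}(f):=\mathrm{TV}(\mathcal{P}_{f_0},\mathcal{P}_{f_1})$, where for discrete distributions $\mathrm{TV}(\mathcal{Q}_1,\mathcal{Q}_2)=\sup_B|\mathcal{Q}_1(B)-\mathcal{Q}_2(B)|=\tfrac12\sum_z|\mathcal{Q}_1(z)-\mathcal{Q}_2(z)|$. For a joint distribution $\mathbb{Q}$ of $(\mathbf{X}_0,\mathbf{X}_1)$ with marginals $\mathcal{P}_0,\mathcal{P}_1$ (a stochastic transport map), $\Delta\mathrm{MDP}(f,\mathbb{Q}):=\mathbb{E}_{(\mathbf{X}_0,\mathbf{X}_1)\sim\mathbb{Q}}|f(\mathbf{X}_0,0)-f(\mathbf{X}_1,1)|$. *)

From mathcomp Require Import all_boot all_order all_algebra.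
From mathcomp Require Import reals.
Set Implicit Arguments. Unset Strict Implicit. Unset Printing Implicit Defensive.
Import Order.TTheory GRing.Theory Num.Theory.
Local Open Scope ring_scope.

Section Defs.
Variable R : realType.

Definition emp_mass (n : nat) (v : 'I_n -> R) (z : R) : R :=
  #|[set i | v i == z]|%:R / n%:R.

Definition emp_support (n : nat) (v : 'I_n -> R) : seq R :=
  undup [seq v i | i <- enum 'I_n].

Definition TV_emp (n0 n1 : nat) (v0 : 'I_n0 -> R) (v1 : 'I_n1 -> R) : R :=
  2^-1 * \sum_(z <- undup (emp_support v0 ++ emp_support v1))
           `|emp_mass v0 z - emp_mass v1 z|.

Definition DeltaTVDP (d n0 n1 : nat) (f : 'rV[R]_d -> bool -> R)
    (x0 : 'I_n0 -> 'rV[R]_d) (x1 : 'I_n1 -> 'rV[R]_d) : R :=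
  TV_emp (fun i => f (x0 i) false) (fun j => f (x1 j) true).

(* A joint distribution (coupling) of X_0 ~ Unif(X_0) and X_1 ~ Unif(X_1):
   since the points are distinct, it is a nonnegative mass function on pairs of
   indices whose marginals are uniform. *)
Definition is_coupling (n0 n1 : nat) (Q : 'I_n0 -> 'I_n1 -> R) : Prop :=
  (forall i j, 0 <= Q i j) /\
  (forall i, \sum_(j < n1) Q i j = n0%:R^-1) /\
  (forall j, \sum_(i < n0) Q i j = n1%:R^-1).

Definition DeltaMDP (d n0 n1 : nat) (f : 'rV[R]_d -> bool -> R)
    (x0 : 'I_n0 -> 'rV[R]_d) (x1 : 'I_n1 -> 'rV[R]_d)
    (Q : 'I_n0 -> 'I_n1 -> R) : R :=
  \sum_(i < n0) \sum_(j < n1) Q i j * `|f (x0 i) false - f (x1 j) true|.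

End Defs.

From mathcomp Require Import all_boot all_order all_algebra.
From mathcomp Require Import reals.
From mathcomp Require Import ring lra.
Import Order.TTheory GRing.Theory Num.Theory.
Local Open Scope ring_scope.

(* Maximal coupling: the common mass min(P z, Q z) of each value z is put on
   the pairs of indices whose values both equal z, spread uniformly, and the
   leftover masses, each of total TV(P, Q), are coupled independently.  Pairs
   with equal values cost nothing and all others cost at most 1, so the
   expected distance is at most TV(P, Q). *)

Set Implicit Arguments.
Unset Strict Implicit.
Unset Printing Implicit Defensive.

Section Fibers.
Variables (I : finType) (T : eqType).

Definition fiber_size (w : I -> T) (z : T) : nat := #|[set i | w i == z]|.

Lemma sum_by_fibers (V : nmodType) (w : I -> T) (s : seq T) (F : I -> V) :
  uniq s -> (forall i, w i \in s) ->
  \sum_i F i = \sum_(z <- s) \sum_(i | w i == z) F i.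
Proof.
move=> s_uniq w_s; rewrite (exchange_big_dep predT) //=; apply: eq_bigr => i _.
rewrite -big_filter (eq_filter (a2 := pred1 (w i))) => [|z]; last first.
  by rewrite /= eq_sym.
by rewrite filter_pred1_uniq ?big_seq1.
Qed.

Lemma sum_fiber_const (V : nmodType) (w : I -> T) z (c : V) :
  \sum_(i | w i == z) c = c *+ fiber_size w z.
Proof. by rewrite -sumr_const; apply: eq_bigl => i; rewrite inE. Qed.

Lemma fiber_size_gt0 (w : I -> T) i : (0 < fiber_size w (w i))%N.
Proof. by apply/card_gt0P; exists i; rewrite inE. Qed.

Lemma sum_fiber_average (R : numFieldType) (w : I -> T) (s : seq T)
    (g : T -> R) :
  uniq s -> (forall i, w i \in s) ->
  (forall z, fiber_size w z = 0%N -> g z = 0) ->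
  \sum_i g (w i) / (fiber_size w (w i))%:R = \sum_(z <- s) g z.
Proof.
move=> s_uniq w_s g0; rewrite (sum_by_fibers _ s_uniq w_s).
apply: eq_bigr => z _.
transitivity (\sum_(i | w i == z) g z / (fiber_size w z)%:R).
  by apply: eq_bigr => i /eqP->.
rewrite sum_fiber_const -[_ *+ _]mulr_natr.
have [/g0 ->|nz] := eqVneq (fiber_size w z) 0%N; first by rewrite !mul0r.
by rewrite divfK ?pnatr_eq0.
Qed.

End Fibers.

Lemma psumr_mulfK (R : numFieldType) (I : finType) (u : I -> R) i :
  (forall j, 0 <= u j) -> u i * (\sum_j u j) / (\sum_j u j) = u i.
Proof.
move=> u_ge0; have [sum0|nz] := eqVneq (\sum_j u j) 0; last by rewrite mulfK.
by rewrite (psumr_eq0P _ sum0) ?mul0r.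
Qed.

Section Empirical.
Variable R : realType.
Implicit Types n : nat.

Lemma emp_mass_ge0 n (v : 'I_n -> R) z : 0 <= emp_mass v z.
Proof. by rewrite divr_ge0 ?ler0n. Qed.

Lemma emp_mass_fiber0 n (v : 'I_n -> R) z :
  fiber_size v z = 0%N -> emp_mass v z = 0.
Proof. by rewrite /emp_mass -/(fiber_size v z) => ->; rewrite mul0r. Qed.

Lemma emp_mass_fiber n (v : 'I_n -> R) i :
  emp_mass v (v i) / (fiber_size v (v i))%:R = n%:R^-1.
Proof.
by rewrite /emp_mass -/(fiber_size v _) mulrAC divff ?mul1r // pnatr_eq0
  -lt0n fiber_size_gt0.
Qed.

Lemma mem_emp_support n (v : 'I_n -> R) i : v i \in emp_support v.
Proof. by rewrite mem_undup map_f ?mem_enum. Qed.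

Lemma sum_emp_mass n (v : 'I_n -> R) (s : seq R) :
  (0 < n)%N -> uniq s -> (forall i, v i \in s) ->
  \sum_(z <- s) emp_mass v z = 1.
Proof.
move=> n_gt0 s_uniq v_s; rewrite -(sum_fiber_average s_uniq v_s)
  => [|z]; last exact: emp_mass_fiber0.
under eq_bigr do rewrite emp_mass_fiber.
by rewrite sumr_const card_ord -[_ *+ n]mulr_natr mulVf ?pnatr_eq0 -?lt0n.
Qed.

Definition emp_overlap n0 n1 (a : 'I_n0 -> R) (b : 'I_n1 -> R) (z : R) : R :=
  Num.min (emp_mass a z) (emp_mass b z).

Definition emp_residual n0 n1 (a : 'I_n0 -> R) (b : 'I_n1 -> R) (i : 'I_n0) :=
  (emp_mass a (a i) - emp_overlap a b (a i)) / (fiber_size a (a i))%:R.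

(* If TV_emp a b = 0 then every residual vanishes, so the division by zero in
   the second summand is harmless. *)
Definition maximal_coupling n0 n1 (a : 'I_n0 -> R) (b : 'I_n1 -> R)
    (i : 'I_n0) (j : 'I_n1) : R :=
  (a i == b j)%:R * emp_overlap a b (a i)
    / ((fiber_size a (a i))%:R * (fiber_size b (b j))%:R)
  + emp_residual a b i * emp_residual b a j / TV_emp a b.

Section Coupling.
Variables (n0 n1 : nat) (a : 'I_n0 -> R) (b : 'I_n1 -> R).

Let S := undup (emp_support a ++ emp_support b).

Lemma emp_overlapC z : emp_overlap b a z = emp_overlap a b z.
Proof. exact: minC. Qed.

Lemma emp_overlap_ge0 z : 0 <= emp_overlap a b z.
Proof. by rewrite le_min !emp_mass_ge0. Qed.

Lemma emp_overlap_fiber0 z : fiber_size a z = 0%N -> emp_overlap a b z = 0.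
Proof.
move=> /emp_mass_fiber0 mass0.
by rewrite /emp_overlap mass0 min_l ?emp_mass_ge0.
Qed.

Lemma emp_residual_ge0 i : 0 <= emp_residual a b i.
Proof. by rewrite divr_ge0 ?ler0n // subr_ge0 ge_min lexx. Qed.

Lemma TV_emp_ge0 : 0 <= TV_emp a b.
Proof. by rewrite mulr_ge0 ?invr_ge0 ?ler0n ?sumr_ge0. Qed.

Lemma TV_empC : TV_emp b a = TV_emp a b.
Proof.
rewrite /TV_emp (perm_big S); last first.
  by apply: perm_undup => z; rewrite !mem_cat orbC.
by under eq_bigr do rewrite distrC.
Qed.

Hypotheses (n0_gt0 : (0 < n0)%N) (n1_gt0 : (0 < n1)%N).

Lemma TV_emp_overlap : TV_emp a b = 1 - \sum_(z <- S) emp_overlap a b z.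
Proof.
have a_S i : a i \in S by rewrite mem_undup mem_cat mem_emp_support.
have b_S j : b j \in S by rewrite mem_undup mem_cat mem_emp_support orbT.
have massa := sum_emp_mass n0_gt0 (undup_uniq _) a_S.
have massb := sum_emp_mass n1_gt0 (undup_uniq _) b_S.
have dist z : `|emp_mass a z - emp_mass b z|
    = emp_mass a z + emp_mass b z - 2 * emp_overlap a b z.
  by rewrite /emp_overlap minr_absE; field.
rewrite /TV_emp -/S; under eq_bigr do rewrite dist.
rewrite !big_split /= sumrN -mulr_sumr massa massb; lra.
Qed.

Lemma sum_emp_residual : \sum_i emp_residual a b i = TV_emp a b.
Proof.
have a_S i : a i \in S by rewrite mem_undup mem_cat mem_emp_support.
transitivity (\sum_(z <- S) (emp_mass a z - emp_overlap a b z)).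
  apply: (sum_fiber_average (undup_uniq _) a_S) => z a0.
  by rewrite emp_overlap_fiber0 // emp_mass_fiber0 // subr0.
by rewrite sumrB (sum_emp_mass n0_gt0 (undup_uniq _) a_S) TV_emp_overlap.
Qed.

Lemma emp_residual_TVK i :
  emp_residual a b i * TV_emp a b / TV_emp a b = emp_residual a b i.
Proof. by rewrite -sum_emp_residual; apply/psumr_mulfK/emp_residual_ge0. Qed.

End Coupling.

Section MaximalCoupling.
Variables (n0 n1 : nat) (a : 'I_n0 -> R) (b : 'I_n1 -> R).

Lemma maximal_couplingC i j :
  maximal_coupling b a j i = maximal_coupling a b i j.
Proof.
rewrite /maximal_coupling TV_empC eq_sym [emp_residual b a j * _]mulrC.
rewrite [(fiber_size b _)%:R * _]mulrC.
by case: eqP => [->|_]; rewrite ?(emp_overlapC a b) ?mul0r.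
Qed.

Lemma maximal_coupling_ge0 i j : 0 <= maximal_coupling a b i j.
Proof.
apply: addr_ge0; apply: mulr_ge0.
- exact/mulr_ge0/emp_overlap_ge0/ler0n.
- by rewrite invr_ge0 mulr_ge0 ?ler0n.
- exact/mulr_ge0/emp_residual_ge0/emp_residual_ge0.
- by rewrite invr_ge0 TV_emp_ge0.
Qed.

Lemma sum_matched_mass i :
  \sum_j (a i == b j)%:R * emp_overlap a b (a i)
        / ((fiber_size a (a i))%:R * (fiber_size b (b j))%:R)
  = emp_overlap a b (a i) / (fiber_size a (a i))%:R.
Proof.
transitivity (\sum_(j | b j == a i) emp_overlap a b (a i)
                / ((fiber_size a (a i))%:R * (fiber_size b (a i))%:R)).
  rewrite [RHS]big_mkcond /=; apply: eq_bigr => j _.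
  by rewrite eq_sym; case: eqP => [->|_]; rewrite ?mul1r ?mul0r.
rewrite sum_fiber_const.
have [b0|nz] := eqVneq (fiber_size b (a i)) 0%N.
  by rewrite b0 mulr0n -(emp_overlapC a b) emp_overlap_fiber0 ?mul0r.
have := fiber_size_gt0 a i; rewrite lt0n => nza.
rewrite -[_ *+ _]mulr_natr; field.
by rewrite !pnatr_eq0 nz nza.
Qed.

Hypotheses (n0_gt0 : (0 < n0)%N) (n1_gt0 : (0 < n1)%N).

Lemma sum_maximal_coupling_row i : \sum_j maximal_coupling a b i j = n0%:R^-1.
Proof.
rewrite big_split /= sum_matched_mass -mulr_suml -mulr_sumr.
rewrite sum_emp_residual // TV_empC emp_residual_TVK // -(emp_mass_fiber a i).
by rewrite /emp_residual -mulrDl addrC subrK.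
Qed.

Lemma maximal_coupling_cost :
  (forall i j, `|a i - b j| <= 1) ->
  \sum_i \sum_j maximal_coupling a b i j * `|a i - b j| <= TV_emp a b.
Proof.
move=> dist_le1.
apply: (@le_trans _ _ (\sum_i \sum_j
  emp_residual a b i * emp_residual b a j / TV_emp a b)).
  apply: ler_sum => i _; apply: ler_sum => j _.
  have res_ge0 : 0 <= emp_residual a b i * emp_residual b a j / TV_emp a b.
    by apply: mulr_ge0; [apply: mulr_ge0|rewrite invr_ge0];
      rewrite ?emp_residual_ge0 ?TV_emp_ge0.
  rewrite /maximal_coupling mulrDl; case: eqP => [->|_].
    by rewrite subrr normr0 !mulr0 add0r.
  by rewrite !mul0r add0r ler_piMr.
under eq_bigr do rewrite -mulr_suml -mulr_sumr sum_emp_residual // TV_empC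
  emp_residual_TVK //.
by rewrite sum_emp_residual.
Qed.

End MaximalCoupling.

Lemma is_coupling_maximal_coupling n0 n1 (a : 'I_n0 -> R) (b : 'I_n1 -> R) :
  (0 < n0)%N -> (0 < n1)%N -> is_coupling (maximal_coupling a b).
Proof.
move=> n0_gt0 n1_gt0; split; [exact: maximal_coupling_ge0|split].
- exact: sum_maximal_coupling_row.
- move=> j; under eq_bigr do rewrite -maximal_couplingC.
  exact: sum_maximal_coupling_row.
Qed.

End Empirical.

Theorem mainTheorem3 (R : realType) (d n0 n1 : nat)
    (x0 : 'I_n0 -> 'rV[R]_d) (x1 : 'I_n1 -> 'rV[R]_d)
    (hn0 : (0 < n0)%N) (hn1 : (0 < n1)%N)
    (hx0 : injective x0) (hx1 : injective x1)
    (f : 'rV[R]_d -> bool -> R)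
    (hf : forall x b, 0 <= f x b <= 1)
    (m : nat)
    (hm : size [seq z <- emp_support (fun i => f (x0 i) false)
                 | z \in emp_support (fun j => f (x1 j) true)] = m)
    (delta : R) (hdelta : 0 <= delta)
    (hTV : DeltaTVDP f x0 x1 <= delta) :
  exists Q : 'I_n0 -> 'I_n1 -> R,
    is_coupling Q /\ DeltaMDP f x0 x1 Q <= delta.
Proof.
(* Injectivity, m and 0 <= delta play no role: indices stand for the points. *)
pose a i := f (x0 i) false; pose b j := f (x1 j) true.
have dist_le1 i j : `|a i - b j| <= 1.
  have /andP[? ?] := hf (x0 i) false; have /andP[? ?] := hf (x1 j) true.
  by rewrite /a /b ler_norml; apply/andP; split; lra.
exists (maximal_coupling a b); split; first exact: is_coupling_maximal_coupling.
exact: le_trans (maximal_coupling_cost hn0 hn1 dist_le1) hTV.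
Qed.
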